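(* Every strong locally super-compact $L$-topological space is locally super-compact.
   Context: $L$ is a frame with implication $\to$. $L$-subsets of $X$: maps $X\to L$; nonempty: $\bigvee_xA(x)=1$; ${\rm sub}_X(A,B)=\bigwedge_xA(x)\to B(x)$. $L$-topology: $\mathcal O(X)\subseteq L^X$ closed under finite meets and arbitrary joins containing all constants $a_X$; interior $A^\circ=\bigvee\{B\in\mathcal O(X):B\le A\}$. A base is $\mathcal B\subseteq\mathcal O(X)$ with $A=\bigvee_{B\in\mathcal B}{\rm sub}_X(B,A)\wedge B$ for every open $A$. Super-compact: nonempty $A\in L^X$ with ${\rm sub}_X(A,\bigvee_iV_i)=\bigvee_i{\rm sub}_X(A,V_i)$ for every family of open $V_i$; ${\rm SC}(X)$ their set. Locally super-compact: every open $A=\bigvee_{B\in{\rm SC}(X)}{\rm sub}_X(B,A)\wedge B^\circ$. Strong locally super-compact: $X$ has a base consisting of super-compact open sets. *)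

Set Implicit Arguments.
Unset Strict Implicit.

(* A frame with implication = a complete lattice (arbitrary joins [sup] of
   subsets, given as predicates) with binary meets and a Heyting implication
   right adjoint to meet (which makes finite meets distribute over joins). *)
Record frame := Frame {
  carrier :> Type;
  le : carrier -> carrier -> Prop;
  le_refl : forall a, le a a;
  le_trans : forall a b c, le a b -> le b c -> le a c;
  le_antisym : forall a b, le a b -> le b a -> a = b;
  sup : (carrier -> Prop) -> carrier;
  sup_ub : forall (P : carrier -> Prop) a, P a -> le a (sup P);
  sup_least : forall (P : carrier -> Prop) b,
      (forall a, P a -> le a b) -> le (sup P) b;
  meet : carrier -> carrier -> carrier;
  meet_lb1 : forall a b, le (meet a b) a;
  meet_lb2 : forall a b, le (meet a b) b;
  meet_glb : forall a b c, le c a -> le c b -> le c (meet a b);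
  imp : carrier -> carrier -> carrier;
  imp_adj : forall a b c, le c (imp a b) <-> le (meet c a) b
}.

Section FrameDefs.
Variable L : frame.

Definition ftop : L := @sup L (fun _ : L => True).
Definition inf (P : L -> Prop) : L := @sup L (fun a => forall b, P b -> le a b).
Definition fjoin (I : Type) (f : I -> L) : L := @sup L (fun a => exists i, a = f i).
Definition fmeet (I : Type) (f : I -> L) : L := inf (fun a => exists i, a = f i).

Variable X : Type.

Definition nonemptyL (A : X -> L) : Prop := fjoin A = ftop.
Definition subX (A B : X -> L) : L := fmeet (fun x => imp (A x) (B x)).
Definition leX (A B : X -> L) : Prop := forall x, le (A x) (B x).

Definition is_Ltopology (O : (X -> L) -> Prop) : Prop :=
  (forall A B, O A -> O B -> O (fun x => meet (A x) (B x))) /\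
  (forall S : (X -> L) -> Prop, (forall B, S B -> O B) ->
      O (fun x => sup (fun a => exists B, S B /\ a = B x))) /\
  (forall a : L, O (fun _ => a)).

Variable O : (X -> L) -> Prop.

Definition interior (A : X -> L) : X -> L :=
  fun x => sup (fun a => exists B, O B /\ leX B A /\ a = B x).

Definition is_base (Bs : (X -> L) -> Prop) : Prop :=
  (forall B, Bs B -> O B) /\
  forall A, O A ->
    A = fun x => sup (fun a => exists B, Bs B /\ a = meet (subX B A) (B x)).

Definition super_compact (A : X -> L) : Prop :=
  nonemptyL A /\
  forall (I : Type) (V : I -> X -> L), (forall i, O (V i)) ->
    subX A (fun x => fjoin (fun i => V i x)) = fjoin (fun i => subX A (V i)).

Definition locally_super_compact : Prop :=
  forall A, O A ->
    A = fun x => sup (fun a => exists B, super_compact B /\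
                                          a = meet (subX B A) (interior B x)).

Definition strong_locally_super_compact : Prop :=
  exists Bs, is_base Bs /\ forall B, Bs B -> super_compact B /\ O B.

End FrameDefs.

(* Write an open set A through the base as the join of the terms
   sub(B, A) /\ B(x) with B a basic, hence open and super-compact, set.
   Since B is open, B(x) <= B°(x), so every such term is one of the terms
   of the locally super-compact join and A is below that join. Conversely,
   for every L-subset B, sub(B, A) /\ B°(x) <= sub(B, A) /\ B(x) <= A(x). *)

From Stdlib Require Import FunctionalExtensionality.

Set Implicit Arguments.

Section FrameFacts.
Variable L : frame.

Lemma meet_comm_le (a b : L) : le (meet a b) (meet b a).
Proof. apply meet_glb; [apply meet_lb2 | apply meet_lb1]. Qed.

Lemma inf_lb (P : L -> Prop) (b : L) : P b -> le (inf P) b.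
Proof. intros Hb. apply sup_least. intros a Ha. now apply Ha. Qed.

Lemma meet_imp_le (a b : L) : le (meet (imp a b) a) b.
Proof. apply imp_adj, le_refl. Qed.

End FrameFacts.

Section LocalSuperCompactness.
Variables (L : frame) (X : Type) (O : (X -> L) -> Prop).

Definition sc_interior_join (A : X -> L) (x : X) : L :=
  sup (fun a => exists B, super_compact O B /\
                          a = meet (subX B A) (interior O B x)).

Lemma subX_le_imp (B A : X -> L) (x : X) : le (subX B A) (imp (B x) (A x)).
Proof. apply inf_lb. now exists x. Qed.

Lemma meet_subX_le (B A : X -> L) (x : X) : le (meet (subX B A) (B x)) (A x).
Proof.
  eapply le_trans; [| apply meet_imp_le].
  apply meet_glb.
  - eapply le_trans; [apply meet_lb1 | apply subX_le_imp].
  - apply meet_lb2.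
Qed.

Lemma interior_le (B : X -> L) : leX (interior O B) B.
Proof. intros x. apply sup_least. intros a [C [_ [HCB ->]]]. apply HCB. Qed.

Lemma open_le_interior (B : X -> L) : O B -> leX B (interior O B).
Proof.
  intros HB x. apply sup_ub. exists B. repeat split; [exact HB | intros y; apply le_refl].
Qed.

Lemma sc_interior_join_le (A : X -> L) : leX (sc_interior_join A) A.
Proof.
  intros x. apply sup_least. intros a [B [_ ->]].
  eapply le_trans; [| apply (meet_subX_le B A x)].
  apply meet_glb; [apply meet_lb1 |].
  eapply le_trans; [apply meet_lb2 | apply interior_le].
Qed.

Lemma super_compact_base_le_sc_interior_join (Bs : (X -> L) -> Prop) :
  is_base O Bs -> (forall B, Bs B -> super_compact O B) ->
  forall A, O A -> leX A (sc_interior_join A).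
Proof.
  intros [HBsO HBsA] HBsSC A HA x.
  assert (EAx := f_equal (fun f => f x) (HBsA A HA)); simpl in EAx.
  rewrite EAx. apply sup_least. intros a [B [HB ->]].
  eapply le_trans; [| apply sup_ub; exists B; split; [exact (HBsSC B HB) | reflexivity]].
  apply meet_glb; [apply meet_lb1 |].
  eapply le_trans; [apply meet_lb2 | apply open_le_interior, HBsO, HB].
Qed.

End LocalSuperCompactness.

(* HO is deliberately unused: only the base decomposition of A is needed. *)
Theorem proposition5p5 (L : frame) (X : Type) (O : (X -> L) -> Prop)
  (HO : is_Ltopology O) :
  strong_locally_super_compact O -> locally_super_compact O.
Proof.
  intros [Bs [Hbase HBs]] A HA.
  apply functional_extensionality. intros x.
  apply le_antisym.
  - apply (super_compact_base_le_sc_interior_join Hbase); [| exact HA].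
    intros B HB. apply (HBs B HB).
  - apply sc_interior_join_le.
Qed.
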